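(* Let $\ell\ge1$ and consider the saturation model with $s=\ell$, i.e. thresholds $\underline{\eta}=(1,2,\dots,\ell)$, so the outcome of $y$ is $\min(y,\ell)$. For $j\ge1$ let $c_j=\frac{(\ell+1)^j-1}{\ell}$ (an integer), and let $p(c)$ be the word defined (for these thresholds) by $$p(c)=o(0)^{c}\,0\,o(1)^{c}\,0\,o(2)^{c}\cdots0\,o(\ell)^{c}\;1\,u(\ell)^{c}\;1\,u(\ell-1)^{c}\;1\,u(\ell-2)^{c}\cdots1\,u(0)^{c}\;0,$$ where $o(x)=0^{\ell-x}1^x$, $u(x)=1^x0^{\ell-x}$ and $w^c$ is the concatenation of $c$ copies of $w$. Define matrices recursively by $R_1=p(c_1)$ (a single row of length $2(\ell+1)^2$) and, for $i\ge2$, $R_i=\begin{bmatrix}p(c_i)\\ R_{i-1}R_{i-1}\cdots R_{i-1}\end{bmatrix}$, where the bottom block is the horizontal concatenation of $\ell+1$ copies of $R_{i-1}$ (so $R_i$ has $i$ rows and $2(\ell+1)^{i+1}$ columns). Let $R_i^{\infty}$ be the infinite horizontal periodic repetition of $R_i$, with columns indexed by $t\ge0$. Then for every $i\ge1$, every row index $r\in\{1,\dots,i\}$ (counted from the top) and every $t\ge0$, $$\min\Big(\sum_{u=t}^{t+\ell-1}R_i^{\infty}(r,u),\;\ell\Big)=g\Big(\big\lfloor t/(\ell+1)^{\,i+1-r}\big\rfloor \bmod 2(\ell+1)\Big),$$ where $g:\{0,\dots,2\ell+1\}\to\{0,\dots,\ell\}$ is given by $g(k)=k$ for $k\le\ell$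 and $g(k)=2\ell+1-k$ for $k\ge\ell+1$. Equivalently, the outcome matrix of $R_i^\infty$ over all length-$\ell$ bursts is the periodic repetition of $P_i\otimes\mathbf{1}^{\ell+1}$, where $P_1=(g(0),\dots,g(2\ell+1))$ and $P_i=\begin{bmatrix}(g(0),\dots,g(2\ell+1))\otimes\mathbf{1}^{(\ell+1)^{i-1}}\\ P_{i-1}\cdots P_{i-1}\end{bmatrix}$ ($\ell+1$ copies of $P_{i-1}$).
   Context: The sum $\sum_{u=t}^{t+\ell-1}R_i^\infty(r,u)$ is the number of ones the $r$-th test row has in common with the length-$\ell$ burst whose ones occupy positions $t,\dots,t+\ell-1$. $\mathbf{1}^m$ denotes the all-ones row of length $m$ and $\otimes$ the Kronecker product. *)

From mathcomp Require Import all_boot.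
Set Implicit Arguments. Unset Strict Implicit. Unset Printing Implicit Defensive.

Definition wpow (w : seq nat) (c : nat) : seq nat := flatten (nseq c w).

Definition oword (l x : nat) : seq nat := nseq (l - x) 0 ++ nseq x 1.
Definition uword (l x : nat) : seq nat := nseq x 1 ++ nseq (l - x) 0.

(* p(c) = o(0)^c 0 o(1)^c 0 ... 0 o(l)^c 1 u(l)^c 1 u(l-1)^c ... 1 u(0)^c 0 *)
Definition pword (l c : nat) : seq nat :=
  flatten [seq (if x == 0 then [::] else [:: 0]) ++ wpow (oword l x) c
          | x <- iota 0 l.+1]
  ++ flatten [seq 1 :: wpow (uword l (l - x)) c | x <- iota 0 l.+1]
  ++ [:: 0].

Definition cc (l j : nat) : nat := ((l.+1) ^ j - 1) %/ l.

(* Rmat l i = R_i as the list of its rows (top row first), for i >= 1;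
   R_1 = p(c_1), R_i = [p(c_i) ; R_{i-1} ... R_{i-1} (l+1 copies)]. *)
Fixpoint Rmat (l i : nat) : seq (seq nat) :=
  match i with
  | 0 => [::]
  | 1 => [:: pword l (cc l 1)]
  | i'.+1 => pword l (cc l i) :: [seq flatten (nseq l.+1 row) | row <- Rmat l i']
  end.

(* R_i^infty(r,u), rows r counted from 1 at the top, columns u >= 0 *)
Definition Rinf (l i r u : nat) : nat :=
  let row := nth [::] (Rmat l i) r.-1 in nth 0 row (u %% size row).

Definition gfun (l k : nat) : nat := if k <= l then k else (2 * l).+1 - k.

From mathcomp Require Import all_boot zify.

(* Let j = i + 1 - r, c = c_j and N = l c + 1, so that N = (l+1)^j (cc_spec).
   Row r of R_i is p(c) repeated (l+1)^(r-1) times (Rmat_row), hence row r of R_i^oo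
   is the periodic extension of p(c) (nth_wpow_mod).
   Prepending a 0 to p(c) cuts it into 2(l+1) blocks of length N followed by a final
   0: block k is the separator bit [l < k] followed by c copies of the word
   a |-> level (k + a) (a < l), where level x = [l <= x <= 2l]; indeed o(x) and
   u(l - x) are exactly the words of the blocks x and l+1+x.  Thus column u of the
   periodic row equals cell (u + 1), an explicit function of the block index
   (u+1)/N mod 2(l+1) and of the offset (u+1) mod N (nth_pword).
   The window sums of cell are then computed by induction on the start t: moving
   the window changes its sum by cell (t+l+1) - cell (t+1), and a case analysis on
   the offset of t in its block (window_step) shows that this is exactly the change
   of g ((t/N) mod 2(l+1)).  Since g <= l, the saturation min(-, l) is inactive. *)

Lemma wpow_mkseq (w : seq nat) (c : nat) :
  wpow w c = mkseq (fun j => nth 0 w (j %% size w)) (c * size w).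
Proof.
elim: c => [|c IH] //; rewrite -[LHS]/(w ++ wpow w c) IH mulSn /mkseq iotaD map_cat.
congr (_ ++ _).
  rewrite -[in LHS](mkseq_nth 0 w); apply/eq_in_map => j.
  by rewrite mem_iota => /andP [_ jw]; rewrite modn_small.
by rewrite add0n -[size w]addn0 iotaDl -map_comp; apply/eq_map => j /=; rewrite addn0 modnDl.
Qed.

Lemma size_wpow (w : seq nat) (c : nat) : size (wpow w c) = c * size w.
Proof. by rewrite wpow_mkseq size_mkseq. Qed.

Lemma nth_wpow_mod (w : seq nat) (n u : nat) : 0 < n -> 0 < size w ->
  nth 0 (wpow w n) (u %% size (wpow w n)) = nth 0 w (u %% size w).
Proof.
move=> n0 w0; rewrite size_wpow wpow_mkseq nth_mkseq ?ltn_pmod ?muln_gt0 ?n0 //.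
by rewrite modn_dvdm // dvdn_mull.
Qed.

Lemma wpow_mul (w : seq nat) (a b : nat) : wpow (wpow w b) a = wpow w (a * b).
Proof.
elim: a => [|a IH] //.
by rewrite -[LHS]/(wpow w b ++ wpow (wpow w b) a) IH mulSn /wpow nseqD flatten_cat.
Qed.

Lemma mkseq_blocks (T : Type) (f : nat -> T) (a N : nat) :
  mkseq f (a * N) = flatten [seq mkseq (fun j => f (k * N + j)) N | k <- iota 0 a].
Proof.
elim: a => [|a IH] //.
rewrite mulSnr /mkseq iotaD map_cat -/(mkseq f (a * N)) IH add0n.
rewrite -addn1 iotaD map_cat flatten_cat /= cats0; congr (_ ++ _).
by rewrite -[a * N]addn0 iotaDl -map_comp addn0.
Qed.

Lemma Rmat_S (l i : nat) : 0 < i ->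
  Rmat l i.+1 = pword l (cc l i.+1) :: [seq wpow row l.+1 | row <- Rmat l i].
Proof. by case: i. Qed.

Lemma size_Rmat (l i : nat) : size (Rmat l i) = i.
Proof. by elim: i => [|[|i] IH] //; rewrite Rmat_S // /= size_map IH. Qed.

Lemma Rmat_row (l i r : nat) : 1 <= r <= i ->
  nth [::] (Rmat l i) r.-1 = wpow (pword l (cc l (i.+1 - r))) (l.+1 ^ r.-1).
Proof.
elim: i r => [|i IH] r /andP [r1 ri]; first lia.
case: r r1 ri => [|r] // _ ri.
case: i IH ri => [|i] IH ri; first by case: r ri => //= _; rewrite /wpow /= cats0.
case: r ri => [|r] ri; first by rewrite /= subSS subn0 /wpow /= cats0.
rewrite Rmat_S //; set M := Rmat l i.+1.
rewrite [nth _ (_ :: _) _]/= (nth_map [::]) /M ?size_Rmat //.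
by rewrite (IH r.+1) ?ri // wpow_mul -expnS !subSS.
Qed.

(* c_j is an integer: l c_j + 1 = (l+1)^j, because (l+1)^j = 1 mod l. *)
Lemma cc_spec (l j : nat) : 0 < l -> l * cc l j + 1 = l.+1 ^ j.
Proof.
move=> l0; have pos : 0 < l.+1 ^ j by rewrite expn_gt0.
have: l.+1 ^ j == 1 %[mod l] by rewrite -modnXm -addn1 modnDl modnXm exp1n.
rewrite eqn_mod_dvd // => /divnK dvd.
by rewrite /cc mulnC dvd subnK.
Qed.

(* The indicator of the band [l, 2l]; every entry of p(c) is a value of it. *)
Definition level (l x : nat) : nat := l <= x <= 2 * l.

Definition levelword (l k : nat) : seq nat := mkseq (fun a => level l (k + a)) l.

Lemma oword_levelword (l x : nat) : x <= l -> oword l x = levelword l x.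
Proof.
move=> xl; apply: (@eq_from_nth _ 0) => [|a].
  by rewrite size_mkseq size_cat !size_nseq; lia.
rewrite size_cat !size_nseq subnK // => al.
rewrite nth_mkseq // nth_cat size_nseq /level !nth_nseq.
by case: ifP; case: ifP => //; lia.
Qed.

Lemma uword_levelword (l x : nat) : x <= l -> uword l (l - x) = levelword l (l.+1 + x).
Proof.
move=> xl; apply: (@eq_from_nth _ 0) => [|a].
  by rewrite size_mkseq size_cat !size_nseq; lia.
rewrite size_cat !size_nseq subnKC ?leq_subr // => al.
rewrite nth_mkseq // nth_cat size_nseq /level !nth_nseq.
by case: ifP; case: ifP => //; lia.
Qed.

(* Block k of 0 :: p(c): the separator [l < k], then c copies of the level word of k. *)
Definition block (l c k : nat) : seq nat := (l < k : nat) :: wpow (levelword l k) c.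

Lemma pword_blocks (l c : nat) :
  0 :: pword l c = flatten [seq block l c k | k <- iota 0 (2 * l.+1)] ++ [:: 0].
Proof.
rewrite mul2n -addnn iotaD map_cat flatten_cat -catA /pword add0n.
rewrite -cat_cons; congr (_ ++ _ ++ _).
  rewrite [iota 0 _]/= /= {1}/block oword_levelword //.
  congr (_ :: _ ++ flatten _); apply/eq_in_map => x; rewrite mem_iota => /andP [x1 xl].
  rewrite oword_levelword; last lia.
  by case: x x1 xl => // x _ xl; rewrite ltnNge -ltnS -add1n xl.
rewrite -[in iota l.+1 _](addn0 l.+1) iotaDl addn0 -map_comp; congr flatten.
apply/eq_in_map => x; rewrite mem_iota => /andP [_ xl].
by rewrite /= /block uword_levelword // ltnS leq_addr.
Qed.

(* The entry at position q of the periodic sequence 0 :: p(c) :: p(c) :: ... (with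
   N = l c + 1): k is the block index of q and q mod N its offset inside the block. *)
Definition cell (l N q : nat) : nat :=
  let k := (q %/ N) %% (2 * l.+1) in
  if q %% N == 0 then (l < k : nat) else level l (k + (q %% N).-1 %% l).

Lemma cell_at (l N K j : nat) : j < N ->
  cell l N (K * N + j) =
  if j == 0 then (l < K %% (2 * l.+1) : nat)
  else level l (K %% (2 * l.+1) + j.-1 %% l).
Proof.
move=> jN; have N0 : 0 < N by case: (N) jN.
by rewrite /cell divnMDl // modnMDl divn_small // modn_small // addn0.
Qed.

Lemma cell_mod (l N q : nat) : cell l N (q %% (2 * l.+1 * N)) = cell l N q.
Proof. by rewrite /cell -modn_divl modn_mod modn_dvdm // dvdn_mull. Qed.

Lemma block_cells (l c k : nat) : 0 < l -> k < 2 * l.+1 ->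
  block l c k = mkseq (fun j => cell l (l * c).+1 (k * (l * c).+1 + j)) (l * c).+1.
Proof.
move=> l0 kp; rewrite /mkseq -[iota 0 _]/(0 :: iota (1 + 0) (l * c)) iotaDl /=.
rewrite cell_at // (modn_small kp) /block wpow_mkseq size_mkseq mulnC -map_comp /=.
congr (_ :: _); apply/eq_in_map => j; rewrite mem_iota add0n => jlc /=.
by rewrite add1n cell_at ?ltnS // (modn_small kp) nth_mkseq // ltn_pmod.
Qed.

Lemma pword_cells (l c : nat) : 0 < l ->
  0 :: pword l c = mkseq (cell l (l * c).+1) (2 * l.+1 * (l * c).+1) ++ [:: 0].
Proof.
move=> l0; rewrite pword_blocks mkseq_blocks; congr (flatten _ ++ _).
by apply/eq_in_map => k; rewrite mem_iota => /andP [_ kp]; apply: block_cells.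
Qed.

Lemma size_pword (l c : nat) : 0 < l -> size (pword l c) = 2 * l.+1 * (l * c).+1.
Proof.
by move=> l0; have := congr1 size (pword_cells l c l0); rewrite size_cat size_mkseq addn1 => -[].
Qed.

Lemma nth_pword (l c u : nat) : 0 < l ->
  nth 0 (pword l c) (u %% (2 * l.+1 * (l * c).+1)) = cell l (l * c).+1 u.+1.
Proof.
move=> l0; set S := 2 * l.+1 * (l * c).+1.
have S0 : 0 < S by rewrite !muln_gt0.
have shift : cell l (l * c).+1 (u %% S).+1 = cell l (l * c).+1 u.+1.
  rewrite -[LHS]cell_mod -[RHS]cell_mod -/S; congr cell.
  by rewrite -addn1 modnDml addn1.
rewrite -[LHS]/(nth 0 (0 :: pword l c) (u %% S).+1) pword_cells // nth_cat size_mkseq.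
case: ltnP => [uS | Su]; first by rewrite nth_mkseq.
have uS : (u %% S).+1 = S by apply/eqP; rewrite eqn_leq Su ltn_pmod.
by rewrite -shift uS subnn -cell_mod modnn /cell div0n mod0n.
Qed.

Lemma succ_mod (p k : nat) : k < p -> k.+1 %% p = if k.+1 == p then 0 else k.+1.
Proof. by move=> kp; case: eqP => [->|ne]; [exact: modnn | apply: modn_small; lia]. Qed.

(* Passing from block k to block k+1 (cyclically) shifts the level words by one:
   the separator of block k+1 continues the word of block k. *)
Lemma next_level (l k a : nat) : k < 2 * l.+1 -> a < l ->
  (if a == 0 then (l < k.+1 %% (2 * l.+1) : nat)
   else level l (k.+1 %% (2 * l.+1) + a.-1)) = level l (k + a).
Proof.
move=> kp al; rewrite succ_mod // /level.
by case: eqP => ?; case: eqP => ?; lia.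
Qed.

(* At a block boundary the window loses the separator of block k+1 and gains the
   last letter of its level word; this matches the change from g(k) to g(k+1). *)
Lemma next_boundary (l k : nat) : 0 < l -> k < 2 * l.+1 ->
  level l (k.+1 %% (2 * l.+1) + l.-1) + gfun l k =
  (l < k.+1 %% (2 * l.+1) : nat) + gfun l (k.+1 %% (2 * l.+1)).
Proof.
move=> l0 kp; rewrite succ_mod // /level /gfun.
by case: eqP => ? /=; case: ifP => ?; try case: ifP => ?; lia.
Qed.

(* g never exceeds l, so the saturation at l is inactive. *)
Lemma gfun_le (l k : nat) : gfun l k <= l.
Proof. by rewrite /gfun; case: ifP => //; lia. Qed.

Section Window.
Variables (l c : nat).
Hypotheses (l0 : 0 < l) (c0 : 0 < c).
Let N := (l * c).+1.

(* Sliding the window from t to t+1 trades cell (t+1) for cell (t+l+1); the window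
   sum plus g at the block of t is invariant. *)
Lemma window_step (t : nat) :
  cell l N (t + l).+1 + gfun l ((t %/ N) %% (2 * l.+1)) =
  cell l N t.+1 + gfun l ((t.+1 %/ N) %% (2 * l.+1)).
Proof.
have N0 : 0 < N by [].
have lN : l < N by rewrite ltnS leq_pmulr.
rewrite (divn_eq t N); move: (t %/ N) (t %% N) (ltn_pmod t N0) => K m mN.
set k := K %% (2 * l.+1).
have kp : k < 2 * l.+1 by rewrite ltn_pmod.
have Knext : K.+1 %% (2 * l.+1) = k.+1 %% (2 * l.+1).
  by rewrite -(addn1 k) modnDml addn1.
rewrite divnMDl // (divn_small mN) addn0 -/k.
case: (ltnP m.+1 N) => [m1N | Nm1].
  rewrite -[(K * N + m).+1]addnS divnMDl // (divn_small m1N) addn0 -/k cell_at //=.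
  case: (ltnP (m + l).+1 N) => [inside | across].
    have -> : (K * N + m + l).+1 = K * N + (m + l).+1 by rewrite addnS addnA.
    by rewrite cell_at // -/k /= modnDr.
  have [c' NE] : exists c', N = (c' * l + l).+1.
    by exists c.-1; rewrite /N -mulSnr prednK // mulnC.
  set a := (m + l).+1 - N.
  have al : a < l by rewrite /a; lia.
  have mE : m = c' * l + a by rewrite /a; lia.
  have -> : (K * N + m + l).+1 = K.+1 * N + a by rewrite /a mulSn; lia.
  rewrite cell_at ?(ltn_trans al lN) // Knext (modn_small (leq_ltn_trans (leq_pred a) al)).
  by rewrite mE modnMDl (modn_small al) next_level.
have m1E : m.+1 = N by apply/eqP; rewrite eqn_leq mN Nm1.
have -> : (K * N + m).+1 = K.+1 * N + 0 by rewrite mulSn; lia.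
have -> : (K * N + m + l).+1 = K.+1 * N + l by rewrite mulSn; lia.
have predl : l.-1 < l by rewrite ltn_predL.
rewrite !cell_at // divnMDl // div0n addn0 Knext /= (gtn_eqF l0) (modn_small predl).
by rewrite next_boundary.
Qed.

Lemma window (t : nat) :
  \sum_(t <= u < t + l) cell l N u.+1 = gfun l ((t %/ N) %% (2 * l.+1)).
Proof.
elim: t => [|t IH].
  rewrite div0n mod0n /gfun /= big_nat big1 // => u /andP [_ ul].
  have lN : l < N by rewrite ltnS leq_pmulr.
  rewrite -[u.+1]add0n -(mul0n N) cell_at ?(leq_ltn_trans ul lN) //= mod0n (modn_small ul).
  by rewrite /level; lia.
have lt_t : t < t + l by rewrite -[X in X < _]addn0 ltn_add2l.
have := window_step t; rewrite -IH (big_ltn lt_t) addSn big_nat_recr ?leq_addr //=.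
lia.
Qed.

End Window.

Theorem mainTheorem3 (l : nat) (hl : 1 <= l) (i : nat) (hi : 1 <= i)
  (r : nat) (hr : 1 <= r <= i) (t : nat) :
  minn (\sum_(t <= u < t + l) Rinf l i r u) l =
  gfun l ((t %/ (l.+1) ^ (i.+1 - r)) %% (2 * l.+1)).
Proof.
set j := i.+1 - r; set c := cc l j.
have Nj : (l * c).+1 = l.+1 ^ j by rewrite -addn1 cc_spec.
have c0 : 0 < c.
  have : l.+1 ^ 1 <= l.+1 ^ j by rewrite leq_exp2l // /j; lia.
  rewrite expn1 -Nj ltnS; case: c Nj => // Nj; rewrite muln0; lia.
have row u : Rinf l i r u = cell l (l * c).+1 u.+1.
  rewrite /Rinf Rmat_row // nth_wpow_mod ?expn_gt0 // size_pword //.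
  by rewrite nth_pword.
rewrite (eq_bigr _ (fun u _ => row u)) window // -Nj.
exact/minn_idPl/gfun_le.
Qed.
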